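(* Let $(\mathcal{A},\{\eta_n\}_{n\ge1})$ be an $NS_\infty$-algebra. Then $(\mathcal{A},\{\overline{\eta}_n\}_{n\ge1})$ is an $A_\infty$-algebra, where $\overline{\eta}_1(a)=\eta_1([1];a)$ and $\overline{\eta}_n(a_1,\dots,a_n)=\sum_{j=1}^{n+1}\eta_n([j];a_1,\dots,a_n)$ for $n\ge2$.
   Context: Over a field of characteristic $0$. An $A_\infty$-algebra: graded vector space $\mathcal{A}$ with degree $n-2$ maps $\mu_n:\mathcal{A}^{\otimes n}\to\mathcal{A}$ such that for all $k\ge1$ and homogeneous $a_1,\dots,a_k$: $\sum_{m+n=k+1}\sum_{i=1}^m(-1)^{i(n+1)+n(|a_1|+\cdots+|a_{i-1}|)}\mu_m(a_1,\dots,a_{i-1},\mu_n(a_i,\dots,a_{i+n-1}),a_{i+n},\dots,a_k)=0$. Let $C_n=\{[1],\dots,[n]\}$ (formal symbols). $\mathcal{O}(1)=\mathrm{Hom}(\mathbf{k}[C_1]\otimes\mathcal{A},\mathcal{A})$, $\mathcal{O}(n)=\mathrm{Hom}(\mathbf{k}[C_{n+1}]\otimes\mathcal{A}^{\otimes n},\mathcal{A})$ for $n\ge2$ (graded maps); call $C_1$, resp. $C_{n+1}$, the index set of $\mathcal{O}(n)$. For $g\in\mathcal{O}(n)$ write $g([*];-)$ for the sum of $g([j];-)$ over its index set, and set $g([j];-)=0$ if $[j]$ is not in its index set. For $f\in\mathcal{O}(m)$ of degree $m-2$, $g\in\mathcal{O}(n)$ of degree $n-2$, $1\le i\le m$, homogeneous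 $a_1,\dots,a_{m+n-1}$, put $\varepsilon=(-1)^{n(|a_1|+\cdots+|a_{i-1}|)}$ and $\bar g_\ast=g([*];a_i,\dots,a_{i+n-1})$; the (graded) partial composition $f\circ_ig\in\mathcal{O}(m+n-1)$ is $\varepsilon$ times: $f([r];a_1,\dots,a_{i-1},\bar g_*,a_{i+n},\dots)$ if $1\le r\le i-1$; $f([i];a_1,\dots,a_{i-1},g([r-i+1];a_i,\dots,a_{i+n-1}),a_{i+n},\dots)$ if $i\le r\le i+n-1$; $f([r-n+1];\dots,\bar g_*,\dots)$ if $i+n\le r\le m+n-1$; $f([i];\dots,g([n+1];a_i,\dots,a_{i+n-1}),\dots)+f([m+1];\dots,\bar g_*,\dots)$ if $r=m+n$ (for $[r]$ in the index set of $\mathcal{O}(m+n-1)$). An $NS_\infty$-algebra is $(\mathcal{A},\{\eta_n\}_{n\ge1})$ with $\eta_n\in\mathcal{O}(n)$ of degree $n-2$ such that for every $k\ge1$, every $[r]$ in the index set of $\mathcal{O}(k)$ and homogeneous $a_1,\dots,a_k$: $\sum_{m+n=k+1}\sum_{i=1}^m(-1)^{i(n+1)}(\eta_m\circ_i\eta_n)([r];a_1,\dots,a_k)=0$. *)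

From HB Require Import structures.
From mathcomp Require Import all_boot all_order all_algebra.
Set Implicit Arguments. Unset Strict Implicit. Unset Printing Implicit Defensive.
Import Order.TTheory GRing.Theory Num.Theory.
Local Open Scope ring_scope.

(* Conventions: a graded vector space is a K-module V together with a family
   G : int -> {pred V} of subspaces ("homogeneous elements of degree d") such
   that V is their internal direct sum.  An n-ary map is a function
   seq V -> V, used on lists of length n.  Indices [j] are 1-based nats. *)

Section Defs.
Variable K : fieldType.
Variable V : lmodType K.

Definition graded_space (G : int -> {pred V}) : Prop :=
  [/\ (forall d, 0 \in G d),
      (forall d (c : K) (x y : V), x \in G d -> y \in G d -> c *: x + y \in G d),
      (forall v : V, exists s : seq (int * V),
          all (fun p => p.2 \in G p.1) s /\ v = \sum_(p <- s) p.2) &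
      (forall s : seq (int * V), uniq (map fst s) ->
          all (fun p => p.2 \in G p.1) s -> \sum_(p <- s) p.2 = 0 ->
          all (fun p => p.2 == 0) s)].

Definition homog_seq (G : int -> {pred V}) (ds : seq int) (s : seq V) : bool :=
  all2 (fun a d => a \in G d) s ds.

Definition multilinear (n : nat) (f : seq V -> V) : Prop :=
  forall (s1 s2 : seq V) (c : K) (x y : V), (size s1 + size s2).+1 = n ->
    f (s1 ++ (c *: x + y) :: s2) = c *: f (s1 ++ x :: s2) + f (s1 ++ y :: s2).

Definition graded_map (G : int -> {pred V}) (n : nat) (d : int) (f : seq V -> V) : Prop :=
  multilinear n f /\
  forall (ds : seq int) (s : seq V), size ds = n -> homog_seq G ds s ->
    f s \in G (\sum_(x <- ds) x + d).

(* s with the block a_i..a_{i+n-1} (i 1-based) replaced by h(a_i..a_{i+n-1}) *)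
Definition insert_at (h : seq V -> V) (i n : nat) (s : seq V) : seq V :=
  take i.-1 s ++ h (take n (drop i.-1 s)) :: drop (i.-1 + n) s.

Definition degsum (ds : seq int) (i : nat) : int := \sum_(x <- take i.-1 ds) x.

Definition Ainf_algebra (G : int -> {pred V}) (mu : nat -> seq V -> V) : Prop :=
  (forall n : nat, (0 < n)%N -> graded_map G n (n%:Z - 2) (mu n)) /\
  forall (k : nat) (ds : seq int) (s : seq V), (0 < k)%N -> size ds = k ->
    homog_seq G ds s ->
    \sum_(1 <= m < k.+1) \sum_(1 <= i < m.+1)
       ((-1) ^ ((i * (k.+1 - m).+1)%N%:Z + (k.+1 - m)%N%:Z * degsum ds i)) *:
          mu m (insert_at (mu (k.+1 - m)%N) i (k.+1 - m) s) = 0.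

(* index set of O(n): C_1 if n = 1, C_{n+1} if n >= 2 *)
Definition idx (n j : nat) : bool :=
  if n == 1%N then j == 1%N else (1 <= j <= n.+1)%N.

(* An element of O(n) is represented by g : nat -> seq V -> V, g j = g([j]; -).
   ev enforces the convention g([j];-) = 0 for [j] outside the index set. *)
Definition ev (g : nat -> seq V -> V) (n j : nat) (s : seq V) : V :=
  if idx n j then g j s else 0.

Definition star (g : nat -> seq V -> V) (n : nat) (s : seq V) : V :=
  \sum_(1 <= j < n.+2 | idx n j) g j s.

(* (f o_i g)([r]; a_1,...,a_{m+n-1}) for f in O(m), g in O(n), degrees ds *)
Definition pcomp (f g : nat -> seq V -> V) (m n i r : nat)
    (ds : seq int) (s : seq V) : V :=
  let eps : K := (-1) ^ (n%:Z * degsum ds i) in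
  let ins h := insert_at h i n s in
  eps *: (if (r < i)%N then ev f m r (ins (star g n))
          else if (r < i + n)%N then ev f m i (ins (ev g n (r - i).+1))
          else if (r < m + n)%N then ev f m (r - n).+1 (ins (star g n))
          else if r == (m + n)%N then
            ev f m i (ins (ev g n n.+1)) + ev f m m.+1 (ins (star g n))
          else 0).

Definition NSinf_algebra (G : int -> {pred V}) (eta : nat -> nat -> seq V -> V) : Prop :=
  (forall n j : nat, (0 < n)%N -> idx n j -> graded_map G n (n%:Z - 2) (eta n j)) /\
  forall (k r : nat) (ds : seq int) (s : seq V), (0 < k)%N -> idx k r ->
    size ds = k -> homog_seq G ds s ->
    \sum_(1 <= m < k.+1) \sum_(1 <= i < m.+1)
       ((-1) ^ ((i * (k.+1 - m).+1)%N%:Z)) *: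
          pcomp (eta m) (eta (k.+1 - m)%N) m (k.+1 - m) i r ds s = 0.

Definition eta_bar (eta : nat -> nat -> seq V -> V) (n : nat) (s : seq V) : V :=
  star (eta n) n s.

End Defs.

From Pilot Require Import Defs.
From HB Require Import structures.
From mathcomp Require Import all_boot all_order all_algebra.
From mathcomp Require Import zify.
Set Implicit Arguments. Unset Strict Implicit. Unset Printing Implicit Defensive.
Import Order.TTheory GRing.Theory Num.Theory.
Local Open Scope ring_scope.

(* Summing the NS-infinity relation over all outputs [r] of the index set of
   O(k) collapses every partial composition: by multilinearity of eta_m in its
   i-th slot, sum_r (eta_m o_i eta_n)([r]; a) is eps times
   eta_bar_m(a_1, .., eta_bar_n(a_i, ..), ..).  The sign (-1)^(i(n+1)) of the
   NS relation times this eps is exactly the Koszul sign of the A-infinity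
   relation. *)

Section NSinfToAinf.
Variables (K : fieldType) (V : lmodType K).
Implicit Types (f g : nat -> seq V -> V) (s : seq V).

Lemma multilinear_big (n : nat) (h : seq V -> V) s1 s2 (I : Type) (r : seq I)
    (P : pred I) (F : I -> V) :
  multilinear n h -> (size s1 + size s2).+1 = n ->
  h (s1 ++ (\sum_(j <- r | P j) F j) :: s2) = \sum_(j <- r | P j) h (s1 ++ F j :: s2).
Proof.
move=> hlin hsz.
have hD x y : h (s1 ++ (x + y) :: s2) = h (s1 ++ x :: s2) + h (s1 ++ y :: s2).
  by have := hlin s1 s2 1 x y hsz; rewrite !scale1r.
have h0 : h (s1 ++ 0 :: s2) = 0.
  by have := hD 0 0; rewrite addr0 -{1}[h _]addr0 => /addrI/esym.
exact: (big_morph (fun x => h (s1 ++ x :: s2)) hD h0).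
Qed.

Lemma multilinear0 (n : nat) (h : seq V -> V) s1 s2 :
  multilinear n h -> (size s1 + size s2).+1 = n -> h (s1 ++ 0 :: s2) = 0.
Proof.
move=> hlin hsz.
by have := multilinear_big [::] xpredT (fun _ : unit => 0) hlin hsz; rewrite !big_nil.
Qed.

Lemma size_insert_context (m n i : nat) s :
  (0 < i <= m)%N -> size s = (m + n).-1 ->
  (size (take i.-1 s) + size (drop (i.-1 + n) s)).+1 = m.
Proof. by move=> hi hs; rewrite size_drop size_takel; lia. Qed.

Lemma graded_map_big (G : int -> {pred V}) (n : nat) (d : int) (I : Type)
    (r : seq I) (P : pred I) (F : I -> seq V -> V) :
  graded_space G -> (forall j, P j -> graded_map G n d (F j)) ->
  graded_map G n d (fun s => \sum_(j <- r | P j) F j s).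
Proof.
move=> [G0 GD _ _] hF; split=> [s1 s2 c x y hsz | ds s hds hs].
  rewrite scaler_sumr -big_split; apply: eq_bigr => j Pj.
  exact: (hF j Pj).1.
apply: (big_ind (fun v => v \in G (\sum_(x <- ds) x + d))) => [|x y Gx Gy|j Pj].
- exact: G0.
- by have := GD _ 1 x y Gx Gy; rewrite scale1r.
- exact: (hF j Pj).2.
Qed.

Lemma idx_le (n i : nat) : (0 < i <= n)%N -> idx n i.
Proof. by rewrite /idx; case: eqP; lia. Qed.

Lemma ev_idx g (n j : nat) : idx n j -> ev g n j = g j.
Proof. by rewrite /ev => ->. Qed.

Lemma starE g (n : nat) s : star g n s = \sum_(1 <= j < n.+2) ev g n j s.
Proof. by rewrite /star big_mkcond. Qed.

Lemma big_idx (k : nat) (F : nat -> V) :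
  (k = 1%N -> F 2%N = 0) ->
  \sum_(1 <= r < k.+2 | idx k r) F r = \sum_(1 <= r < k.+2) F r.
Proof.
move=> F2; rewrite big_mkcond; apply: eq_big_nat => r /andP[r1 r2].
rewrite /idx; case: eqP => [k1|_]; last by rewrite r1 -ltnS r2.
have [//|r_neq1] := eqVneq r 1%N.
have -> : r = 2%N by lia.
by rewrite F2.
Qed.

Definition pcomp_unsigned f g (m n i r : nat) s : V :=
  let ins h := insert_at h i n s in
  if (r < i)%N then ev f m r (ins (star g n))
  else if (r < i + n)%N then ev f m i (ins (ev g n (r - i).+1))
  else if (r < m + n)%N then ev f m (r - n).+1 (ins (star g n))
  else if r == (m + n)%N then
    ev f m i (ins (ev g n n.+1)) + ev f m m.+1 (ins (star g n))
  else 0.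

Lemma pcompE f g (m n i r : nat) ds s :
  Defs.pcomp f g m n i r ds s =
  (-1) ^ (n%:Z * degsum ds i) *: pcomp_unsigned f g m n i r s.
Proof. by []. Qed.

Section PcompRanges.
Variables (f g : nat -> seq V -> V) (m n i : nat) (s : seq V).
Hypothesis hi : (0 < i <= m)%N.

Local Notation ucomp r := (pcomp_unsigned f g m n i r s).
Local Notation ins h := (insert_at h i n s).

Lemma sum_pcomp_unsigned_before :
  \sum_(1 <= r < i) ucomp r = \sum_(1 <= j < i) ev f m j (ins (star g n)).
Proof. by apply: eq_big_nat => r /andP[_ ri]; rewrite /pcomp_unsigned ri. Qed.

Lemma sum_pcomp_unsigned_block :
  \sum_(i <= r < i + n) ucomp r = \sum_(1 <= l < n.+1) ev f m i (ins (ev g n l)).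
Proof.
rewrite -[i in \sum_(i <= _ < _) _]add0n -[1%N]add0n !big_addn.
rewrite addKn subn1; apply: eq_big_nat => l /andP[_ ln].
rewrite /pcomp_unsigned ifF; last lia.
by rewrite ifT; [congr (ev _ _ _ (ins (ev _ _ _))); lia | lia].
Qed.

Lemma sum_pcomp_unsigned_after :
  \sum_(i + n <= r < m + n) ucomp r =
  \sum_(i.+1 <= j < m.+1) ev f m j (ins (star g n)).
Proof.
rewrite -[(i + n)%N]add0n -[i.+1]add0n !big_addn.
have -> : (m + n - (i + n) = m.+1 - i.+1)%N by lia.
apply: eq_big_nat => j /andP[_ jm].
rewrite /pcomp_unsigned ifF; last lia.
rewrite ifF; last lia.
by rewrite ifT; [congr (ev _ _ _ _); lia | lia].
Qed.

Lemma pcomp_unsigned_last :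
  ucomp (m + n) = ev f m i (ins (ev g n n.+1)) + ev f m m.+1 (ins (star g n)).
Proof.
rewrite /pcomp_unsigned ifF; last lia.
by rewrite ifF ?ltnn ?eqxx //; lia.
Qed.

Lemma sum_pcomp_unsigned :
  multilinear m (f i) -> size s = (m + n).-1 ->
  \sum_(1 <= r < (m + n).+1) ucomp r = star f m (ins (star g n)).
Proof.
move=> hf hs.
have hsz := size_insert_context hi hs.
have split_i : ev f m i (ins (star g n)) =
    \sum_(1 <= l < n.+1) ev f m i (ins (ev g n l)) + ev f m i (ins (ev g n n.+1)).
  by rewrite (ev_idx f (idx_le hi)) /insert_at starE (multilinear_big _ _ _ hf hsz)
             big_nat_recr.
rewrite big_nat_recr /=; last lia.
rewrite (big_cat_nat _ (n := i)) /=; [|lia|lia].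
rewrite (big_cat_nat _ (m := i) (n := i + n)) /=; [|lia|lia].
rewrite starE big_nat_recr /=; last lia.
rewrite (big_cat_nat _ (m := 1%N) (n := i) (p := m.+1)) /=; [|lia|lia].
rewrite (big_ltn _ (m := i) (n := m.+1)); last lia.
rewrite sum_pcomp_unsigned_before sum_pcomp_unsigned_block
        sum_pcomp_unsigned_after pcomp_unsigned_last split_i.
by rewrite -!addrA; congr (_ + (_ + _)); rewrite addrCA.
Qed.

End PcompRanges.

Lemma sum_pcomp f g (m n i k : nat) ds s :
  (0 < i <= m)%N -> (0 < n)%N -> (m + n = k.+1)%N -> size s = k ->
  multilinear m (f i) ->
  \sum_(1 <= r < k.+2 | idx k r) Defs.pcomp f g m n i r ds s =
  (-1) ^ (n%:Z * degsum ds i) *: star f m (insert_at (star g n) i n s).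
Proof.
move=> hi n0 hmn hs hf.
have hs' : size s = (m + n).-1 by rewrite hmn.
rewrite big_idx => [|k1].
  rewrite -hmn; under eq_bigr do rewrite pcompE.
  by rewrite -scaler_sumr sum_pcomp_unsigned.
(* For k = 1 the index set C_1 omits [2]; the term at [2] vanishes because
   eta_1 has the single output [1]. *)
have [m1 n1] : m = 1%N /\ n = 1%N by lia.
have i1 : i = 1%N by lia.
rewrite (_ : 2%N = (m + n)%N) 1?pcompE ?pcomp_unsigned_last //; last lia.
move: hf hs'; rewrite m1 n1 i1 => hf hs'.
rewrite -[ev f 1 2 _]/0 addr0 ev_idx // /insert_at -[ev g 1 2 _]/0.
by rewrite (multilinear0 hf (size_insert_context (m := 1%N) (i := 1%N) isT hs')) scaler0.
Qed.

Lemma size_homog_seq (G : int -> {pred V}) (ds : seq int) s :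
  homog_seq G ds s -> size s = size ds.
Proof. by rewrite /homog_seq all2E => /andP[/eqP]. Qed.

End NSinfToAinf.

Theorem proposition6p13 (K : fieldType) (hchar : [pchar K] =i pred0)
    (V : lmodType K) (G : int -> {pred V}) (eta : nat -> nat -> seq V -> V) :
  graded_space G -> NSinf_algebra G eta -> Ainf_algebra G (eta_bar eta).
Proof.
move=> hG [eta_graded eta_rel]; split=> [n n0|k ds s k0 hds hhom].
  by apply: graded_map_big => // j; apply: eta_graded.
have hs : size s = k by rewrite (size_homog_seq hhom).
transitivity (\sum_(1 <= r < k.+2 | idx k r) \sum_(1 <= m < k.+1)
    \sum_(1 <= i < m.+1) ((-1) ^ ((i * (k.+1 - m).+1)%N%:Z)) *:
      Defs.pcomp (eta m) (eta (k.+1 - m)%N) m (k.+1 - m) i r ds s); last first.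
  by rewrite big1 // => r hr; apply: eta_rel.
rewrite exchange_big; apply: eq_big_nat => m /andP[m0 mk].
rewrite exchange_big; apply: eq_big_nat => i /andP[i0 im].
have hi : (0 < i <= m)%N by rewrite i0.
rewrite -scaler_sumr sum_pcomp //; [|lia|lia|exact: (eta_graded m i _ (idx_le hi)).1].
by rewrite scalerA -expfzDr // oppr_eq0 oner_eq0.
Qed.
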